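(* Let $P, Q\subseteq\mathbb{R}^7$ be distinct associative $3$-planes. Then $\Theta(P)\cap\Theta(Q) = (P\cap Q)\lrcorner\varphi = \{v\lrcorner\varphi : v\in P\cap Q\}$.
   Context: Equip $\mathbb{R}^7$ with its standard inner product, orientation and basis. Let $\varphi = e_{123} - e_{167} - e_{527} - e_{563} - e_{415} - e_{426} - e_{437}$ ($e_{ijk} = e_i\wedge e_j\wedge e_k$), $\psi = \star\varphi = e_{4567} - e_{4523} - e_{4163} - e_{4127} - e_{2637} - e_{1537} - e_{1526}$, and define $\times$ by $\langle u \times v, w \rangle = \varphi(u,v,w)$. A $3$-dimensional subspace is associative if closed under $\times$. For $u,v$: $u\wedge v$ is the 2-form $(a,b)\mapsto \langle u,a\rangle\langle v,b\rangle - \langle u,b\rangle\langle v,a\rangle$; $u\lrcorner\varphi$ is the 2-form $(a,b)\mapsto \varphi(u,a,b)$; $\Psi_{uv}$ is the 2-form $(a,b)\mapsto\psi(u,v,a,b)$. For associative $P$, $\Theta(P) = \Lambda^2(P)\oplus\Psi(P)$ where $\Lambda^2(P) = \mathrm{Span}\{u\wedge v: u,v\in P\}$ and $\Psi(P) = \mathrm{Span}\{\Psi_{uv} : u,v\in P\}$. *)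

From HB Require Import structures.
From mathcomp Require Import all_boot all_order all_algebra.
From mathcomp Require Import reals.
Set Implicit Arguments. Unset Strict Implicit. Unset Printing Implicit Defensive.
Import Order.TTheory GRing.Theory Num.Theory.
Local Open Scope ring_scope.

Section G2.
Variable R : realType.

(* vectors of R^7 are row vectors; basis index n (1-based, as in the paper) *)
Definition ix (n : nat) : 'I_7 := inord n.-1.

Definition ebasis (k : 'I_7) : 'rV[R]_7 := delta_mx 0 k.

Definition dotp (u v : 'rV[R]_7) : R := (u *m v^T) 0 0.

Definition e3 (i j k : nat) (u v w : 'rV[R]_7) : R :=
  \det (\matrix_(r < 3, c < 3)
          (nth 0 [:: u; v; w] r) 0 (nth (ix 0) [:: ix i; ix j; ix k] c)).

Definition e4 (i j k l : nat) (u v w x : 'rV[R]_7) : R :=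
  \det (\matrix_(r < 4, c < 4)
          (nth 0 [:: u; v; w; x] r) 0
          (nth (ix 0) [:: ix i; ix j; ix k; ix l] c)).

Definition phi (u v w : 'rV[R]_7) : R :=
  e3 1 2 3 u v w - e3 1 6 7 u v w - e3 5 2 7 u v w - e3 5 6 3 u v w
  - e3 4 1 5 u v w - e3 4 2 6 u v w - e3 4 3 7 u v w.

Definition psi (u v w x : 'rV[R]_7) : R :=
  e4 4 5 6 7 u v w x - e4 4 5 2 3 u v w x - e4 4 1 6 3 u v w x
  - e4 4 1 2 7 u v w x - e4 2 6 3 7 u v w x - e4 1 5 3 7 u v w x
  - e4 1 5 2 6 u v w x.

(* cross product: <u x v, w> = phi(u,v,w), i.e. (u x v)_k = phi(u,v,e_k) *)
Definition cross (u v : 'rV[R]_7) : 'rV[R]_7 :=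
  \row_k phi u v (ebasis k).

Definition assoc_plane (P : {vspace 'rV[R]_7}) : Prop :=
  \dim P = 3%N /\ forall u v, u \in P -> v \in P -> cross u v \in P.

(* A 2-form omega on R^7 is encoded by its matrix omega(e_a, e_b). *)
Definition form2 (f : 'rV[R]_7 -> 'rV[R]_7 -> R) : 'M[R]_7 :=
  \matrix_(a, b) f (ebasis a) (ebasis b).

Definition wedge (u v : 'rV[R]_7) : 'M[R]_7 :=
  form2 (fun a b => dotp u a * dotp v b - dotp u b * dotp v a).

Definition contr (u : 'rV[R]_7) : 'M[R]_7 := form2 (phi u).

Definition Psi (u v : 'rV[R]_7) : 'M[R]_7 := form2 (psi u v).

Definition span2 (f : 'rV[R]_7 -> 'rV[R]_7 -> 'M[R]_7)
    (P : {vspace 'rV[R]_7}) (om : 'M[R]_7) : Prop :=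
  exists s : seq (R * 'rV[R]_7 * 'rV[R]_7),
    (forall t, t \in s -> t.1.2 \in P /\ t.2 \in P) /\
    om = \sum_(t <- s) t.1.1 *: f t.1.2 t.2.

Definition Lambda2 (P : {vspace 'rV[R]_7}) := span2 wedge P.
Definition PsiP (P : {vspace 'rV[R]_7}) := span2 Psi P.

Definition Theta (P : {vspace 'rV[R]_7}) (om : 'M[R]_7) : Prop :=
  exists om1 om2, Lambda2 P om1 /\ PsiP P om2 /\ om = om1 + om2.

End G2.

(* Write om in Theta(P) as W + w _| phi with W in Lambda^2(P) and w in P: this uses
   Psi_uv = u /\ v - (u x v) _| phi and the fact that P x P = P.  On an associative
   plane psi vanishes, so (u x v) x x = <x,u> v - <x,v> u there, and W acts on P as
   a x _ for a = skew_vec W in P.  The form pi14 om = 3 om - (skew_vec om) _| phi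
   does not see the w _| phi part, so it is the same for the decompositions of om
   along P and along Q.  Its square sends x in P to 4 a x (a x x) and any y to
   -|a|^2 y modulo P.  Comparing the two decompositions, if a or the vector b
   attached to Q were nonzero, x |-> 4 a x (a x x) + |b|^2 x would map P
   isomorphically into Q or the other way round, forcing P = Q.  Hence a = b = 0,
   so W = W' = 0 and om = w _| phi with w in P /\ Q. *)
From HB Require Import structures.
From mathcomp Require Import all_boot all_order all_algebra.
From mathcomp Require Import reals.
From mathcomp Require Import ring lra.
From Stdlib Require Import Classical.
Set Implicit Arguments. Unset Strict Implicit. Unset Printing Implicit Defensive.
Import Order.TTheory GRing.Theory Num.Theory.
Local Open Scope ring_scope.

Section Determinants.
Variable R : comPzRingType.

Definition det3 (a1 a2 a3 b1 b2 b3 c1 c2 c3 : R) : R :=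
  a1 * (b2 * c3 - b3 * c2) - a2 * (b1 * c3 - b3 * c1) + a3 * (b1 * c2 - b2 * c1).

Lemma det_mx3 (f : nat -> nat -> R) :
  \det (\matrix_(i < 3, j < 3) f i j) =
  det3 (f 0%N 0%N) (f 0%N 1%N) (f 0%N 2%N) (f 1%N 0%N) (f 1%N 1%N) (f 1%N 2%N)
       (f 2%N 0%N) (f 2%N 1%N) (f 2%N 2%N).
Proof.
rewrite (expand_det_row _ ord0) !big_ord_recl big_ord0 /cofactor.
rewrite !(expand_det_row _ ord0) !big_ord_recl !big_ord0 /cofactor ?det_mx11 ?det_mx00.
by rewrite !mxE /= /det3; ring.
Qed.

Lemma det_mx4 (f : nat -> nat -> R) :
  \det (\matrix_(i < 4, j < 4) f i j) =
    f 0%N 0%N * det3 (f 1%N 1%N) (f 1%N 2%N) (f 1%N 3%N) (f 2%N 1%N) (f 2%N 2%N)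
                     (f 2%N 3%N) (f 3%N 1%N) (f 3%N 2%N) (f 3%N 3%N)
  - f 0%N 1%N * det3 (f 1%N 0%N) (f 1%N 2%N) (f 1%N 3%N) (f 2%N 0%N) (f 2%N 2%N)
                     (f 2%N 3%N) (f 3%N 0%N) (f 3%N 2%N) (f 3%N 3%N)
  + f 0%N 2%N * det3 (f 1%N 0%N) (f 1%N 1%N) (f 1%N 3%N) (f 2%N 0%N) (f 2%N 1%N)
                     (f 2%N 3%N) (f 3%N 0%N) (f 3%N 1%N) (f 3%N 3%N)
  - f 0%N 3%N * det3 (f 1%N 0%N) (f 1%N 1%N) (f 1%N 2%N) (f 2%N 0%N) (f 2%N 1%N)
                     (f 2%N 2%N) (f 3%N 0%N) (f 3%N 1%N) (f 3%N 2%N).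
Proof.
pose g j a b := f a.+1 (bump j b).
have minorE (j : 'I_4) : row' ord0 (col' j (\matrix_(i < 4, k < 4) f i k)) =
    \matrix_(i < 3, k < 3) g j i k.
  by apply/matrixP => i k; rewrite !mxE.
rewrite (expand_det_row _ ord0) !big_ord_recl big_ord0 /cofactor !minorE.
by rewrite !det_mx3 !mxE /g /bump /= /det3; ring.
Qed.

End Determinants.

Section G2.
Variable R : realType.
Local Notation vec := 'rV[R]_7.
Local Notation form := 'M[R]_7.
Implicit Types (u v w x y z : vec) (W : form).

Lemma e3E i j k u v w : e3 i j k u v w =
  det3 (u 0 (ix i)) (u 0 (ix j)) (u 0 (ix k)) (v 0 (ix i)) (v 0 (ix j)) (v 0 (ix k))
       (w 0 (ix i)) (w 0 (ix j)) (w 0 (ix k)).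
Proof.
exact: (det_mx3 (fun r c => (nth 0 [:: u; v; w] r) 0 (nth (ix 0) [:: ix i; ix j; ix k] c))).
Qed.

Lemma e4E i j k l u v w x : e4 i j k l u v w x =
    u 0 (ix i) * det3 (v 0 (ix j)) (v 0 (ix k)) (v 0 (ix l)) (w 0 (ix j)) (w 0 (ix k))
                      (w 0 (ix l)) (x 0 (ix j)) (x 0 (ix k)) (x 0 (ix l))
  - u 0 (ix j) * det3 (v 0 (ix i)) (v 0 (ix k)) (v 0 (ix l)) (w 0 (ix i)) (w 0 (ix k))
                      (w 0 (ix l)) (x 0 (ix i)) (x 0 (ix k)) (x 0 (ix l))
  + u 0 (ix k) * det3 (v 0 (ix i)) (v 0 (ix j)) (v 0 (ix l)) (w 0 (ix i)) (w 0 (ix j))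
                      (w 0 (ix l)) (x 0 (ix i)) (x 0 (ix j)) (x 0 (ix l))
  - u 0 (ix l) * det3 (v 0 (ix i)) (v 0 (ix j)) (v 0 (ix k)) (w 0 (ix i)) (w 0 (ix j))
                      (w 0 (ix k)) (x 0 (ix i)) (x 0 (ix j)) (x 0 (ix k)).
Proof.
exact: (det_mx4 (fun r c =>
  (nth 0 [:: u; v; w; x] r) 0 (nth (ix 0) [:: ix i; ix j; ix k; ix l] c))).
Qed.

Lemma ix_eq n m : (0 < n < 8)%N -> (0 < m < 8)%N -> (ix n == ix m) = (n == m).
Proof.
case: n => // n; case: m => // m /= ltn8 ltm8.
by rewrite -(inj_eq val_inj) /= !inordK.
Qed.

Lemma ebasisE (k j : 'I_7) : ebasis R k 0 j = (k == j)%:R.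
Proof. by rewrite /ebasis mxE eqxx /= eq_sym. Qed.

Lemma ord7_cases (P : 'I_7 -> Prop) : P (ix 1) -> P (ix 2) -> P (ix 3) -> P (ix 4) ->
  P (ix 5) -> P (ix 6) -> P (ix 7) -> forall k, P k.
Proof.
have ordE n (ltn7 : (n < 7)%N) : Ordinal ltn7 = ix n.+1.
  by apply: val_inj; rewrite /= inordK.
by move=> P1 P2 P3 P4 P5 P6 P7 [[|[|[|[|[|[|[|n]]]]]]] ltn7]; rewrite ?ordE.
Qed.

Lemma sum_ord7 (F : 'I_7 -> R) : \sum_k F k =
  F (ix 1) + F (ix 2) + F (ix 3) + F (ix 4) + F (ix 5) + F (ix 6) + F (ix 7).
Proof.
rewrite !big_ord_recl big_ord0 addr0 !addrA.
by congr (_ + _ + _ + _ + _ + _ + _); congr F; apply: val_inj; rewrite /= inordK.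
Qed.

Lemma dotpE u v : dotp u v =
  u 0 (ix 1) * v 0 (ix 1) + u 0 (ix 2) * v 0 (ix 2) + u 0 (ix 3) * v 0 (ix 3)
  + u 0 (ix 4) * v 0 (ix 4) + u 0 (ix 5) * v 0 (ix 5) + u 0 (ix 6) * v 0 (ix 6)
  + u 0 (ix 7) * v 0 (ix 7).
Proof. by rewrite /dotp mxE sum_ord7 !mxE. Qed.

Ltac cross_coord := by rewrite /cross mxE /phi !e3E /det3 !ebasisE !ix_eq //=; ring.

Lemma cross1E u v : cross u v 0 (ix 1) =
  u 0 (ix 2) * v 0 (ix 3) - u 0 (ix 3) * v 0 (ix 2) + u 0 (ix 4) * v 0 (ix 5)
  - u 0 (ix 5) * v 0 (ix 4) - u 0 (ix 6) * v 0 (ix 7) + u 0 (ix 7) * v 0 (ix 6).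
Proof. cross_coord. Qed.

Lemma cross2E u v : cross u v 0 (ix 2) =
  - u 0 (ix 1) * v 0 (ix 3) + u 0 (ix 3) * v 0 (ix 1) + u 0 (ix 4) * v 0 (ix 6)
  + u 0 (ix 5) * v 0 (ix 7) - u 0 (ix 6) * v 0 (ix 4) - u 0 (ix 7) * v 0 (ix 5).
Proof. cross_coord. Qed.

Lemma cross3E u v : cross u v 0 (ix 3) =
  u 0 (ix 1) * v 0 (ix 2) - u 0 (ix 2) * v 0 (ix 1) + u 0 (ix 4) * v 0 (ix 7)
  - u 0 (ix 5) * v 0 (ix 6) + u 0 (ix 6) * v 0 (ix 5) - u 0 (ix 7) * v 0 (ix 4).
Proof. cross_coord. Qed.

Lemma cross4E u v : cross u v 0 (ix 4) =
  - u 0 (ix 1) * v 0 (ix 5) - u 0 (ix 2) * v 0 (ix 6) - u 0 (ix 3) * v 0 (ix 7)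
  + u 0 (ix 5) * v 0 (ix 1) + u 0 (ix 6) * v 0 (ix 2) + u 0 (ix 7) * v 0 (ix 3).
Proof. cross_coord. Qed.

Lemma cross5E u v : cross u v 0 (ix 5) =
  u 0 (ix 1) * v 0 (ix 4) - u 0 (ix 2) * v 0 (ix 7) + u 0 (ix 3) * v 0 (ix 6)
  - u 0 (ix 4) * v 0 (ix 1) - u 0 (ix 6) * v 0 (ix 3) + u 0 (ix 7) * v 0 (ix 2).
Proof. cross_coord. Qed.

Lemma cross6E u v : cross u v 0 (ix 6) =
  u 0 (ix 1) * v 0 (ix 7) + u 0 (ix 2) * v 0 (ix 4) - u 0 (ix 3) * v 0 (ix 5)
  - u 0 (ix 4) * v 0 (ix 2) + u 0 (ix 5) * v 0 (ix 3) - u 0 (ix 7) * v 0 (ix 1).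
Proof. cross_coord. Qed.

Lemma cross7E u v : cross u v 0 (ix 7) =
  - u 0 (ix 1) * v 0 (ix 6) + u 0 (ix 2) * v 0 (ix 5) + u 0 (ix 3) * v 0 (ix 4)
  - u 0 (ix 4) * v 0 (ix 3) - u 0 (ix 5) * v 0 (ix 2) + u 0 (ix 6) * v 0 (ix 1).
Proof. cross_coord. Qed.

Definition crossE := (cross1E, cross2E, cross3E, cross4E, cross5E, cross6E, cross7E).

Lemma vec_addE u v k : (u + v) 0 k = u 0 k + v 0 k. Proof. by rewrite mxE. Qed.
Lemma vec_oppE u k : (- u) 0 k = - u 0 k. Proof. by rewrite mxE. Qed.
Lemma vec_scaleE c u k : (c *: u) 0 k = c * u 0 k. Proof. by rewrite mxE. Qed.
Definition vecE := (vec_addE, vec_oppE, vec_scaleE).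

Ltac vec_ring := apply/rowP; elim/ord7_cases; rewrite ?vecE ?crossE ?vecE ?dotpE; ring.
Ltac vec_lin := apply/rowP => ?; rewrite !vecE; ring.

Fact cross_is_semilinear u : semilinear (cross u).
Proof. by split => [c x | x y]; vec_ring. Qed.
HB.instance Definition _ u :=
  GRing.isSemilinear.Build R vec vec _ (cross u) (cross_is_semilinear u).

Lemma crossC u v : cross u v = - cross v u.
Proof. vec_ring. Qed.

Lemma cross_cross x y : cross x (cross x y) = dotp x y *: x - dotp x x *: y.
Proof. vec_ring. Qed.

Lemma dotp_cross u v w : dotp (cross u v) w = phi u v w.
Proof. by rewrite dotpE !crossE /phi !e3E /det3; ring. Qed.

Lemma dotp_crossl u v : dotp (cross u v) u = 0.
Proof. by rewrite dotpE !crossE; ring. Qed.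

Lemma psi_dotp_phi u v x y :
  psi u v x y = dotp u x * dotp v y - dotp u y * dotp v x - phi (cross u v) x y.
Proof. by rewrite -dotp_cross !dotpE !crossE /psi !e4E /det3; ring. Qed.

Lemma dotpC u v : dotp u v = dotp v u.
Proof. by rewrite !dotpE; ring. Qed.

Lemma dotp_cross_cross u v x y :
  dotp (cross (cross u v) x) y = dotp x u * dotp v y - dotp x v * dotp u y - psi u v x y.
Proof. by rewrite dotp_cross psi_dotp_phi (dotpC u x) (dotpC v x); ring. Qed.

Lemma dotpBl u v w : dotp (u - v) w = dotp u w - dotp v w.
Proof. by rewrite !dotpE !vecE; ring. Qed.

Lemma dotpZl c u w : dotp (c *: u) w = c * dotp u w.
Proof. by rewrite !dotpE !vecE; ring. Qed.

Lemma dotp_ebasis u j : dotp u (ebasis R j) = u 0 j.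
Proof.
rewrite /dotp mxE (bigD1 j) //= big1 => [|i /negPf neq_ij]; rewrite !mxE ?eqxx ?neq_ij.
  by rewrite mulr1 addr0.
by rewrite mulr0.
Qed.

Lemma dotp_eq0 x : (dotp x x == 0) = (x == 0).
Proof.
apply/idP/eqP => [|->]; last by rewrite /dotp mul0mx mxE.
rewrite /dotp mxE psumr_eq0 => [/allP x0|i _]; last by rewrite mxE -expr2 sqr_ge0.
apply/rowP => k; have /x0 := mem_index_enum k.
by rewrite !mxE mulf_eq0 orbb => /eqP.
Qed.

Definition crossr w u := cross u w.
Fact crossr_is_semilinear w : semilinear (crossr w).
Proof. by rewrite /crossr; split => [c x | x y]; vec_ring. Qed.
HB.instance Definition _ w :=
  GRing.isSemilinear.Build R vec vec _ (crossr w) (crossr_is_semilinear w).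

Lemma crosslP c u v w : cross (c *: u + v) w = c *: cross u w + cross v w.
Proof. exact: (linearP (crossr w)). Qed.

Lemma crosslZ c u w : cross (c *: u) w = c *: cross u w.
Proof. exact: (linearZZ (crossr w)). Qed.

Lemma cross0l w : cross 0 w = 0.
Proof. exact: (linear0 (crossr w)). Qed.

Lemma cross_suml w I r (P : pred I) (F : I -> vec) :
  cross (\sum_(i <- r | P i) F i) w = \sum_(i <- r | P i) cross (F i) w.
Proof. exact: (linear_sum (crossr w)). Qed.

Lemma cross_sum_delta u v : \sum_a u 0 a *: cross (ebasis R a) v = cross u v.
Proof.
by rewrite [in RHS](row_sum_delta u) cross_suml; apply: eq_bigr => a _; rewrite crosslZ.
Qed.

Lemma wedgeE u v : wedge u v = u^T *m v - v^T *m u.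
Proof.
by apply/matrixP => a b; rewrite !mxE !dotp_ebasis !big_ord1 !mxE [v _ a * _]mulrC.
Qed.

Lemma mul_wedge y u v : y *m wedge u v = dotp y u *: v - dotp y v *: u.
Proof.
by rewrite wedgeE mulmxBr !mulmxA [y *m u^T]mx11_scalar [y *m v^T]mx11_scalar !mul_scalar_mx.
Qed.

Lemma trmx_wedge u v : (wedge u v)^T = - wedge u v.
Proof. by rewrite wedgeE linearB /= !trmx_mul !trmxK opprB. Qed.

Lemma row_wedge a u v : row a (wedge u v) = u 0 a *: v - v 0 a *: u.
Proof. by rewrite rowE mul_wedge !(dotpC (delta_mx 0 a)) !dotp_ebasis. Qed.

Fact contr_is_semilinear : semilinear (@contr R).
Proof.
split => [c x | x y]; apply/matrixP => a b; rewrite !mxE /phi !e3E /det3 !mxE; ring.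
Qed.
HB.instance Definition _ :=
  GRing.isSemilinear.Build R vec 'M[R]_7 _ (@contr R) contr_is_semilinear.

Lemma mul_contr y p : y *m contr p = cross p y.
Proof.
apply/rowP => j; rewrite mxE [in RHS](row_sum_delta y) linear_sum summxE.
by apply: eq_bigr => k _; rewrite linearZ !mxE.
Qed.

Lemma row_contr a p : row a (contr p) = cross p (ebasis R a).
Proof. by rewrite rowE mul_contr. Qed.

Lemma Psi_wedge_contr u v : Psi u v = wedge u v - contr (cross u v).
Proof. by apply/matrixP => a b; rewrite !mxE psi_dotp_phi. Qed.

(* <skew_vec W, e_k> = 1/2 sum_(a,b) W_ab phi(e_a, e_b, e_k); locked so that rewriting
   with linearity lemmas cannot unfold it. *)
Definition skew_vec_def W : vec := 2^-1 *: \sum_(a < 7) cross (ebasis R a) (row a W).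
Fact skew_vec_key : unit. Proof. by []. Qed.
Definition skew_vec := locked_with skew_vec_key skew_vec_def.
Canonical skew_vec_unlockable := [unlockable fun skew_vec].

Fact skew_vec_is_semilinear : semilinear skew_vec.
Proof.
rewrite unlock; split => [c A | A B].
  rewrite scalerA mulrC -scalerA; congr (_ *: _).
  by rewrite scaler_sumr; apply: eq_bigr => a _; rewrite !linearZZ.
by rewrite -scalerDr -big_split; congr (_ *: _); apply: eq_bigr => a _; rewrite !linearD.
Qed.
HB.instance Definition _ :=
  GRing.isSemilinear.Build R form vec _ skew_vec skew_vec_is_semilinear.

Lemma skew_vec_wedge u v : skew_vec (wedge u v) = cross u v.
Proof.
have summandE a : cross (ebasis R a) (row a (wedge u v)) =
    u 0 a *: cross (ebasis R a) v - v 0 a *: cross (ebasis R a) u.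
  by rewrite row_wedge (linearB (cross _)) !(linearZZ (cross _)).
rewrite unlock (eq_bigr _ (fun a _ => summandE a)) sumrB !cross_sum_delta.
rewrite [cross v u]crossC opprK -mulr2n -scaler_nat scalerA.
by rewrite mulVf ?scale1r ?pnatr_eq0.
Qed.

Lemma skew_vec_contr p : skew_vec (contr p) = 3 *: p.
Proof.
have summandE a : cross (ebasis R a) (row a (contr p)) = p - p 0 a *: ebasis R a.
  rewrite row_contr [cross p _]crossC linearN /= cross_cross opprB (dotpC _ p).
  by rewrite !dotp_ebasis ebasisE eqxx scale1r.
rewrite unlock (eq_bigr _ (fun a _ => summandE a)) sumrB sumr_const card_ord.
rewrite -[\sum_a _]/(\sum_a p 0 a *: delta_mx 0 a) -row_sum_delta mulrSr addrK.
rewrite -scaler_nat scalerA; congr (_ *: _).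
by rewrite -[6%N]/(2 * 3)%N natrM mulKf ?pnatr_eq0.
Qed.

Section Span2.
Variables (f : vec -> vec -> form) (P : {vspace vec}).

Lemma span2_0 : span2 f P 0.
Proof. by exists [::]; rewrite big_nil. Qed.

Lemma span2_gen u v : u \in P -> v \in P -> span2 f P (f u v).
Proof.
move=> uP vP; exists [:: (1, u, v)]; rewrite big_seq1 scale1r.
by split => // t; rewrite inE => /eqP ->.
Qed.

Lemma span2P c A B : span2 f P A -> span2 f P B -> span2 f P (c *: A + B).
Proof.
move=> [s [sP ->]] [s' [s'P ->]].
exists (map (fun t => (c * t.1.1, t.1.2, t.2)) s ++ s'); split.
  by move=> t; rewrite mem_cat => /orP[/mapP[t' /sP ? ->] | /s'P].
rewrite big_cat big_map scaler_sumr; congr (_ + _).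
by apply: eq_bigr => t _; rewrite scalerA.
Qed.

Lemma span2_ind (C : form -> Prop) :
    C 0 -> (forall c A B, C A -> C B -> C (c *: A + B)) ->
    (forall u v, u \in P -> v \in P -> C (f u v)) ->
  forall om, span2 f P om -> C om.
Proof.
move=> C0 CP Cf om [s [sP ->]]; elim: s sP => [|t s IHs] sP; first by rewrite big_nil.
have [t1P t2P] := sP t (mem_head t s).
rewrite big_cons; apply: CP; first exact: Cf.
by apply: IHs => t' t's; apply: sP; rewrite inE t's orbT.
Qed.

End Span2.

Lemma Lambda2_trmx P W : Lambda2 P W -> W^T = - W.
Proof.
move: W; apply: span2_ind => [|c A B tA tB|u v _ _]; last exact: trmx_wedge.
  by rewrite trmx0 oppr0.
by rewrite linearD linearZZ /= tA tB scalerN opprD.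
Qed.

Lemma PsiP_Lambda2 P om : PsiP P om -> exists2 W, Lambda2 P W & om = W - contr (skew_vec W).
Proof.
move: om; apply: span2_ind => [|c A B [WA LA ->] [WB LB ->]|u v uP vP].
- by exists 0; [exact: span2_0 | rewrite (linear0 skew_vec) (linear0 (@contr R)) subr0].
- exists (c *: WA + WB); first exact: span2P.
  rewrite (linearD skew_vec) (linearZZ skew_vec) (linearD (@contr R)) (linearZZ (@contr R)).
  by rewrite scalerBr opprD addrACA.
- by exists (wedge u v); [exact: span2_gen | rewrite Psi_wedge_contr skew_vec_wedge].
Qed.

Lemma e4_eq0_dim3 (U : {vspace vec}) i j k l u v w x : (\dim U <= 3)%N ->
  u \in U -> v \in U -> w \in U -> x \in U -> e4 i j k l u v w x = 0.
Proof.
move=> dimU uU vU wU xU; pose X := [tuple u; v; w; x].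
have notfree : ~~ free X.
  apply: contraTN dimU; rewrite /free size_tuple => /eqP dimX; rewrite -ltnNge.
  have sXU : (<<X>> <= U)%VS by apply/span_subvP => y; rewrite !inE => /or4P[] /eqP->.
  by have := dimvS sXU; rewrite dimX.
have [a aX0 [r0 ar0]] : exists2 a : 'I_4 -> R,
    \sum_(r < 4) a r *: X`_r = 0 & exists r, a r != 0.
  apply: NNPP => indep; move/negP: notfree; apply; apply/freeP => a aX0 r.
  by apply/eqP/negPn/negP => ar; apply: indep; exists a => //; exists r.
rewrite /e4; apply/eqP/det0P; exists (\row_r a r).
  by apply: contra ar0 => /eqP/rowP/(_ r0); rewrite !mxE => ->.
apply/rowP => c; rewrite !mxE.
have := congr1 (fun y : vec => y 0 (nth (ix 0) [:: ix i; ix j; ix k; ix l] c)) aX0.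
rewrite summxE mxE => aX0c; rewrite -[RHS]aX0c.
by apply: eq_bigr => r _; rewrite !mxE.
Qed.

Lemma psi_eq0_dim3 (U : {vspace vec}) u v x y : (\dim U <= 3)%N ->
  u \in U -> v \in U -> x \in U -> y \in U -> psi u v x y = 0.
Proof.
move=> dimU uU vU xU yU.
by rewrite /psi !(e4_eq0_dim3 _ _ _ _ dimU uU vU xU yU) !subrr.
Qed.

Section AssociativePlane.
Variable P : {vspace vec}.
Hypothesis assocP : assoc_plane P.

Lemma cross_in u v : u \in P -> v \in P -> cross u v \in P.
Proof. exact: assocP.2. Qed.

Lemma cross_cross_plane u v x : u \in P -> v \in P -> x \in P ->
  cross (cross u v) x = dotp x u *: v - dotp x v *: u.
Proof.
move=> uP vP xP; apply/eqP; rewrite -subr_eq0 -dotp_eq0.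
set chi := _ - _.
have chiP : chi \in P.
  by rewrite !(rpredB, rpredZ, cross_in).
have chi_psi y : dotp chi y = - psi u v x y.
  by rewrite /chi !dotpBl !dotpZl dotp_cross_cross; ring.
by rewrite chi_psi (psi_eq0_dim3 (eq_leq assocP.1) uP vP xP chiP) oppr0.
Qed.

Lemma Lambda2_mul_in W y : Lambda2 P W -> y *m W \in P.
Proof.
move: W; apply: span2_ind => [|c A B AP BP|u v uP vP].
- by rewrite mulmx0 mem0v.
- by rewrite mulmxDr -scalemxAr rpredD ?rpredZ.
- by rewrite mul_wedge rpredB ?rpredZ.
Qed.

Lemma Lambda2_skew_vec_in W : Lambda2 P W -> skew_vec W \in P.
Proof.
move: W; apply: span2_ind => [|c A B AP BP|u v uP vP].
- by rewrite (linear0 skew_vec) mem0v.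
- by rewrite (linearD skew_vec) (linearZZ skew_vec); apply: rpredD => //; apply: rpredZ.
- by rewrite skew_vec_wedge cross_in.
Qed.

Lemma Lambda2_mul_plane W x : Lambda2 P W -> x \in P -> x *m W = cross (skew_vec W) x.
Proof.
move=> + xP; move: W; apply: span2_ind => [|c A B eA eB|u v uP vP].
- by rewrite mulmx0 (linear0 skew_vec) cross0l.
- by rewrite mulmxDr -scalemxAr eA eB (linearD skew_vec) (linearZZ skew_vec) crosslP.
- by rewrite mul_wedge skew_vec_wedge cross_cross_plane.
Qed.

Lemma Lambda2_skew_vec_eq0 W : Lambda2 P W -> skew_vec W = 0 -> W = 0.
Proof.
move=> LW W0; apply/row_matrixP => i; rewrite row0 rowE.
set z := delta_mx 0 i *m W.
have zW : z *m W = 0 by rewrite (Lambda2_mul_plane LW (Lambda2_mul_in _ LW)) W0 cross0l.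
apply/eqP; rewrite -dotp_eq0 /dotp {2}/z trmx_mul (Lambda2_trmx LW).
by rewrite mulNmx mulmxN mulmxA zW mul0mx oppr0 mxE.
Qed.

Lemma cross_plane_onto v : v \in P -> exists2 u, u \in P & exists2 z, z \in P & v = cross u z.
Proof.
move=> vP; have [->|v0] := eqVneq v 0.
  by exists 0; rewrite ?mem0v //; exists 0; rewrite ?mem0v ?(linear0 (cross 0)).
have [x xP xNv] : exists2 x, x \in P & x \notin <[v]>%VS.
  by apply/subvPn/negP => /dimvS; rewrite dim_vline v0 assocP.1.
have u0 : cross v x != 0.
  apply: contra xNv => /eqP vx0; apply/vlineP; exists ((dotp v v)^-1 * dotp v x).
  move/eqP: (cross_cross v x); rewrite vx0 (linear0 (cross v)) eq_sym subr_eq0 => /eqP vvx.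
  by rewrite -scalerA vvx scalerA mulVf ?scale1r ?dotp_eq0.
have uP : cross v x \in P := cross_in vP xP.
move: (cross v x) u0 uP (dotp_crossl v x) => u u0 uP uv0.
exists (- (dotp u u)^-1 *: u); first by rewrite rpredZ.
exists (cross u v); first exact: cross_in.
rewrite crosslZ cross_cross uv0 scale0r sub0r scalerN scaleNr opprK.
by rewrite scalerA mulVf ?scale1r ?dotp_eq0.
Qed.

Lemma Theta_assocE om :
  Theta P om <-> exists W w, [/\ Lambda2 P W, w \in P & om = W + contr w].
Proof.
split => [[om1 [om2 [L1 [Psi2 ->]]]] | [W [w [LW wP ->]]]].
  have [W2 L2 ->] := PsiP_Lambda2 Psi2.
  exists (1 *: om1 + W2), (- skew_vec W2); split.
  - exact: span2P.
  - by rewrite rpredN Lambda2_skew_vec_in.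
  - by rewrite scale1r (linearN (@contr R)) addrA.
have [u uP [z zP ->]] := cross_plane_onto wP.
exists (1 *: wedge u z + W), ((-1) *: Psi u z + 0); split; [|split].
- by apply: span2P => //; apply: span2_gen.
- by apply: span2P; [apply: span2_gen | apply: span2_0].
- by rewrite Psi_wedge_contr scale1r scaleN1r addr0 opprB [_ + W]addrC -addrA subrKC.
Qed.

End AssociativePlane.

(* Three times the projection onto Lambda^2_14 along Lambda^2_7 = contr (R^7). *)
Definition pi14 om : form := 3 *: om - contr (skew_vec om).

Lemma pi14_contr om w : pi14 (om + contr w) = pi14 om.
Proof.
rewrite /pi14 (linearD skew_vec) /= skew_vec_contr (linearD (@contr R)) (linearZZ (@contr R)).
by rewrite scalerDr opprD addrACA subrr addr0.
Qed.

Lemma mul_pi14 y W : y *m pi14 W = 3 *: (y *m W) - cross (skew_vec W) y.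
Proof. by rewrite mulmxBr -scalemxAr mul_contr. Qed.

Section Pi14Square.
Variables (P : {vspace vec}) (W : form).
Hypotheses (assocP : assoc_plane P) (LW : Lambda2 P W).
Let a := skew_vec W.

Lemma pi14_sqr_in y : y *m pi14 W *m pi14 W + dotp a a *: y \in P.
Proof.
have aP : a \in P := Lambda2_skew_vec_in assocP LW.
set z := y *m pi14 W.
have -> : z *m pi14 W + dotp a a *: y =
    3 *: (z *m W) - 3 *: cross a (y *m W) + dotp a y *: a.
  have cross_z : cross a z = 3 *: cross a (y *m W) - (dotp a y *: a - dotp a a *: y).
    by rewrite /z mul_pi14 -/a (linearB (cross a)) /= (linearZZ (cross a)) cross_cross.
  by rewrite mul_pi14 -/a cross_z; vec_lin.
by rewrite rpredD ?rpredB ?rpredZ ?cross_in ?(Lambda2_mul_in _ LW).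
Qed.

Lemma pi14_sqr_plane x : x \in P ->
  x *m pi14 W *m pi14 W = 4 *: (dotp a x *: a - dotp a a *: x).
Proof.
have aP : a \in P := Lambda2_skew_vec_in assocP LW.
have pi14_plane y : y \in P -> y *m pi14 W = 2 *: cross a y.
  by move=> yP; rewrite mul_pi14 (Lambda2_mul_plane assocP LW yP); vec_lin.
move=> xP; rewrite (pi14_plane x xP) -scalemxAl pi14_plane ?cross_in //.
by rewrite cross_cross; vec_lin.
Qed.

End Pi14Square.

Lemma subv_of_transfer (P Q : {vspace vec}) a (beta : R) : a \in P ->
    (forall x, x \in P -> 4 *: (dotp a x *: a - dotp a a *: x) + beta *: x \in Q) ->
    beta != 0 -> beta != 4 * dotp a a -> (P <= Q)%VS.
Proof.
move=> aP PQ beta0 beta4.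
have aQ : a \in Q.
  have := PQ a aP; rewrite subrr scaler0 add0r => /(memvZ beta^-1).
  by rewrite scalerA mulVf ?scale1r.
apply/subvP => x xP; have := memvB (PQ x xP) (memvZ (4 * dotp a x) aQ).
have -> : 4 *: (dotp a x *: a - dotp a a *: x) + beta *: x - (4 * dotp a x) *: a =
    (beta - 4 * dotp a a) *: x by vec_lin.
move=> /(memvZ (beta - 4 * dotp a a)^-1); rewrite scalerA mulVf ?scale1r //.
by rewrite subr_eq0.
Qed.

Lemma pi14_transfer P Q W W' : assoc_plane P -> assoc_plane Q ->
    Lambda2 P W -> Lambda2 Q W' -> pi14 W = pi14 W' -> forall x, x \in P ->
  4 *: (dotp (skew_vec W) x *: skew_vec W - dotp (skew_vec W) (skew_vec W) *: x)
    + dotp (skew_vec W') (skew_vec W') *: x \in Q.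
Proof.
move=> assocP assocQ LW LW' eq_pi14 x xP.
by rewrite -(pi14_sqr_plane assocP LW xP) eq_pi14 pi14_sqr_in.
Qed.

Lemma assoc_plane_subvN (P Q : {vspace vec}) :
  assoc_plane P -> assoc_plane Q -> P != Q -> ~~ (P <= Q)%VS.
Proof.
by move=> [dimP _] [dimQ _]; apply: contra => subPQ; rewrite eqEdim subPQ dimP dimQ.
Qed.

Lemma skew_vec_eq0_of_pi14 (P Q : {vspace vec}) W W' :
    assoc_plane P -> assoc_plane Q -> P != Q ->
    Lambda2 P W -> Lambda2 Q W' -> pi14 W = pi14 W' -> skew_vec W = 0.
Proof.
move=> assocP assocQ neqPQ LW LW' eq_pi14.
have subPQ := subv_of_transfer (Lambda2_skew_vec_in assocP LW)
  (pi14_transfer assocP assocQ LW LW' eq_pi14).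
have subQP := subv_of_transfer (Lambda2_skew_vec_in assocQ LW')
  (pi14_transfer assocQ assocP LW' LW (esym eq_pi14)).
move: (skew_vec W) (skew_vec W') subPQ subQP => a b subPQ subQP.
have hb : (dotp b b == 0) || (dotp b b == 4 * dotp a a).
  apply: contraR (assoc_plane_subvN assocP assocQ neqPQ) => /norP[b0 b4].
  exact: subPQ.
have ha : (dotp a a == 0) || (dotp a a == 4 * dotp b b).
  rewrite eq_sym in neqPQ.
  apply: contraR (assoc_plane_subvN assocQ assocP neqPQ) => /norP[a0 a4].
  exact: subQP.
apply/eqP; rewrite -dotp_eq0; apply/eqP.
by move: ha hb => /orP[] /eqP ha /orP[] /eqP hb; lra.
Qed.

End G2.

Theorem corollary4p13 (R : realType) (P Q : {vspace 'rV[R]_7}) :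
  assoc_plane P -> assoc_plane Q -> P != Q ->
  forall om : 'M[R]_7,
    (Theta P om /\ Theta Q om) <->
    (exists v : 'rV[R]_7, v \in P /\ v \in Q /\ om = contr v).
Proof.
move=> assocP assocQ neqPQ om; split; last first.
  case=> v [vP [vQ ->]]; split; [apply/(Theta_assocE assocP) | apply/(Theta_assocE assocQ)];
    by exists 0, v; rewrite add0r; split => //; apply: span2_0.
case=> /(Theta_assocE assocP)[W [w [LW wP ->]]] /(Theta_assocE assocQ)[W' [z [LW' zQ eq_om]]].
have eq_pi14 : pi14 W = pi14 W' by rewrite -(pi14_contr W w) eq_om pi14_contr.
have a0 := skew_vec_eq0_of_pi14 assocP assocQ neqPQ LW LW' eq_pi14.
rewrite eq_sym in neqPQ.
have b0 := skew_vec_eq0_of_pi14 assocQ assocP neqPQ LW' LW (esym eq_pi14).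
have W0 := Lambda2_skew_vec_eq0 assocP LW a0.
have W'0 := Lambda2_skew_vec_eq0 assocQ LW' b0.
have wz : w = z.
  have := congr1 (@skew_vec R) eq_om; rewrite W0 W'0 !add0r !skew_vec_contr.
  by apply: scalerI; rewrite pnatr_eq0.
by exists w; rewrite W0 add0r; split; [|split; [rewrite wz|]].
Qed.
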